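(* Let $\Phi$ be a real $N\times d$ matrix satisfying the Restricted Isometry Condition with parameters $(2n,\varepsilon)$, $\varepsilon = 0.03/\sqrt{\log n}$, let $v \ne 0$ be $n$-sparse, $x = \Phi v$, and consider an iteration of ROMP run on $x$ with sparsity level $n$, with $I$ the index set and $r\ne 0$ the residual at the start of that iteration. Let $v_0 = v|_{\mathrm{supp}(v)\setminus I}$ (equal to $v$ on $\mathrm{supp}(v)\setminus I$, $0$ elsewhere), $x_0 = \Phi v_0$, $u_0 = \Phi^* x_0$ and $u = \Phi^* r$. Then for every set $T \subset \{1,\dots,d\}$ with $|T|\le 2n$, $\|(u_0 - u)|_T\|_2 \le 2.4\,\varepsilon\,\|v_0\|_2$.
   Context: A vector is $n$-sparse if it has at most $n$ nonzero coordinates. $\Phi$ satisfies the Restricted Isometry Condition with parameters $(m,\varepsilon)$ if $(1-\varepsilon)\|w\|_2 \le \|\Phi w\|_2 \le (1+\varepsilon)\|w\|_2$ for all $m$-sparse $w$. $y|_T$ is the restriction of $y$ to coordinates in $T$. ROMP with input $x$ and sparsity level $n$: Initialize $I=\emptyset$, $r=x$. Repeat until $r=0$: (Identify) $u=\Phi^*r$, choose a set $J$ of the $n$ biggest coordinates of $u$ in magnitude, or all nonzero coordinates of $u$, whichever set is smaller; (Regularize) among subsets $J_0\subset J$ with $|u(i)|\le 2|u(j)|$ for all $i,j\in J_0$, choose one maximizing $\|u|_{J_0}\|_2$; (Update) $I\leftarrow I\cup J_0$, $y=\operatorname{argmin}_{z\in\mathbb{R}^I}\|x-\Phi z\|_2$,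 $r=x-\Phi y$. Output $I$. *)

From HB Require Import structures.
From mathcomp Require Import all_boot all_order all_algebra.
From mathcomp Require Import reals exp.
Set Implicit Arguments. Unset Strict Implicit. Unset Printing Implicit Defensive.
Import Order.TTheory GRing.Theory Num.Theory.
Local Open Scope ring_scope.

Section ROMP.
Variable R : realType.

Definition norm2 (d : nat) (w : 'cV[R]_d) : R :=
  Num.sqrt (\sum_(i < d) w i 0 ^+ 2).

Definition supp (d : nat) (w : 'cV[R]_d) : {set 'I_d} := [set i | w i 0 != 0].

Definition sparse (d m : nat) (w : 'cV[R]_d) : Prop := (#|supp w| <= m)%N.

Definition RIC (N d : nat) (Phi : 'M[R]_(N, d)) (m : nat) (eps : R) : Prop :=
  forall w : 'cV[R]_d, sparse m w ->
    (1 - eps) * norm2 w <= norm2 (Phi *m w) /\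
    norm2 (Phi *m w) <= (1 + eps) * norm2 w.

Definition restrict (d : nat) (T : {set 'I_d}) (y : 'cV[R]_d) : 'cV[R]_d :=
  \col_i (if i \in T then y i 0 else 0).

Definition is_residual (N d : nat) (Phi : 'M[R]_(N, d)) (x : 'cV[R]_N)
    (I : {set 'I_d}) (r : 'cV[R]_N) : Prop :=
  exists y : 'cV[R]_d, supp y \subset I /\
    (forall z : 'cV[R]_d, supp z \subset I ->
        norm2 (x - Phi *m y) <= norm2 (x - Phi *m z)) /\
    r = x - Phi *m y.

Definition identify (d n : nat) (u : 'cV[R]_d) (J : {set 'I_d}) : Prop :=
  if (#|supp u| <= n)%N then J = supp u
  else #|J| = n /\ (forall i j, i \in J -> j \notin J -> `|u j 0| <= `|u i 0|).

Definition comparable (d : nat) (u : 'cV[R]_d) (J0 : {set 'I_d}) : Prop :=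
  forall i j, i \in J0 -> j \in J0 -> `|u i 0| <= 2 * `|u j 0|.

Definition regularize (d : nat) (u : 'cV[R]_d) (J J0 : {set 'I_d}) : Prop :=
  J0 \subset J /\ comparable u J0 /\
  (forall J1 : {set 'I_d}, J1 \subset J -> comparable u J1 ->
     norm2 (restrict J1 u) <= norm2 (restrict J0 u)).

Definition romp_step (N d : nat) (Phi : 'M[R]_(N, d)) (x : 'cV[R]_N) (n : nat)
    (I : {set 'I_d}) (r : 'cV[R]_N) (I' : {set 'I_d}) (r' : 'cV[R]_N) : Prop :=
  r != 0 /\
  exists J J0 : {set 'I_d},
    let u := Phi^T *m r in
    identify n u J /\ regularize u J J0 /\ I' = I :|: J0 /\ is_residual Phi x I' r'.

Inductive romp_state (N d : nat) (Phi : 'M[R]_(N, d)) (x : 'cV[R]_N) (n : nat) :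
    {set 'I_d} -> 'cV[R]_N -> Prop :=
  | romp_init : romp_state Phi x n set0 x
  | romp_next : forall I r I' r', romp_state Phi x n I r ->
      romp_step Phi x n I r I' r' -> romp_state Phi x n I' r'.

End ROMP.

From Pilot Require Import Defs.
From HB Require Import structures.
From mathcomp Require Import all_boot all_order all_algebra.
From mathcomp Require Import reals exp.
From mathcomp Require Import ring lra zify.
Import Order.TTheory GRing.Theory Num.Theory.
Local Open Scope ring_scope.

Set Implicit Arguments. Unset Strict Implicit. Unset Printing Implicit Defensive.

(* Write the residual as r = Phi (v0 - a) with a supported on I.  Least squares
   makes r orthogonal to Phi a, so |Phi a|^2 = <Phi a, Phi v0>; as a and v0 have
   disjoint supports, the restricted isometry property bounds this by
   2 eps |a| |v0|, whence (1 - eps) |Phi a| <= 2 eps |v0|.  Since u0 - u = Phi^T Phi a,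
   its restriction to 2n coordinates has norm at most (1 + eps) |Phi a|, and
   (1 + eps) / (1 - eps) <= 6/5.

   All of this needs |I :|: supp v| <= 2n, i.e. that ROMP never selected more
   indices outside supp v than inside.  This invariant is kept by each step:
   by the estimate above u carries energy at least (4/5 |v0|)^2 on supp v :\: I,
   identification keeps it in J, and the regularized J0 retains a 1/(2K) share,
   K = ceil(log_4 2n).  If most of J0 lay outside supp v, a fifth of that share
   would sit where u has energy at most (22/5 eps |v0|)^2, which the choice
   eps = 0.03 / sqrt(log n) forbids since K <= (24/7) log n. *)

Lemma le_of_sqr_le_mulr (R : realFieldType) (x c : R) :
  0 <= x -> 0 <= c -> x ^+ 2 <= x * c -> x <= c.
Proof. by move=> x0 c0 xc; nra. Qed.

Lemma sqr_le_norm (R : realDomainType) (x y : R) : `|x| <= `|y| -> x ^+ 2 <= y ^+ 2.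
Proof.
move=> xy; rewrite -[x ^+ 2]real_normK ?num_real // -[y ^+ 2]real_normK ?num_real //.
by rewrite lerXn2r ?nnegrE.
Qed.

Section Euclid.
Variables (R : realType) (d : nat).
Implicit Types (a b r w z : 'cV[R]_d).

Definition sqnorm w : R := \sum_(i < d) w i 0 ^+ 2.
Definition vdot a b : R := \sum_(i < d) a i 0 * b i 0.

Lemma sqnorm_ge0 w : 0 <= sqnorm w.
Proof. by apply: sumr_ge0 => i _; rewrite sqr_ge0. Qed.

Lemma norm2_ge0 w : 0 <= norm2 w.
Proof. exact: sqrtr_ge0. Qed.

Lemma norm2_sqr w : norm2 w ^+ 2 = sqnorm w.
Proof. by rewrite sqr_sqrtr // sqnorm_ge0. Qed.

Lemma vdotC a b : vdot a b = vdot b a.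
Proof. by apply: eq_bigr => i _; rewrite mulrC. Qed.

Lemma vdotxx w : vdot w w = sqnorm w.
Proof. by apply: eq_bigr => i _; rewrite expr2. Qed.

Lemma vdotDl a b z : vdot (a + b) z = vdot a z + vdot b z.
Proof. by rewrite /vdot -big_split; apply: eq_bigr => i _; rewrite !mxE mulrDl. Qed.

Lemma vdotNl a z : vdot (- a) z = - vdot a z.
Proof. by rewrite /vdot -sumrN; apply: eq_bigr => i _; rewrite !mxE mulNr. Qed.

Lemma vdotZl (c : R) a z : vdot (c *: a) z = c * vdot a z.
Proof. by rewrite /vdot mulr_sumr; apply: eq_bigr => i _; rewrite !mxE mulrA. Qed.

Lemma vdotBl a b z : vdot (a - b) z = vdot a z - vdot b z.
Proof. by rewrite vdotDl vdotNl. Qed.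

Lemma vdotDr a b z : vdot z (a + b) = vdot z a + vdot z b.
Proof. by rewrite vdotC vdotDl !(vdotC z). Qed.

Lemma vdotBr a b z : vdot z (a - b) = vdot z a - vdot z b.
Proof. by rewrite vdotC vdotBl !(vdotC z). Qed.

Lemma vdotZr (c : R) a z : vdot z (c *: a) = c * vdot z a.
Proof. by rewrite vdotC vdotZl vdotC. Qed.

Lemma vdot0r z : vdot z 0 = 0.
Proof. by apply: big1 => i _; rewrite mxE mulr0. Qed.

Lemma vdot0l z : vdot 0 z = 0.
Proof. by rewrite vdotC vdot0r. Qed.

Lemma norm2_0 : norm2 (0 : 'cV[R]_d) = 0.
Proof. by rewrite /norm2 big1 ?sqrtr0 // => i _; rewrite mxE expr0n. Qed.

Lemma sqnorm_eq0 w : sqnorm w = 0 -> w = 0.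
Proof.
move/eqP; rewrite psumr_eq0 => [/allP wP|i _]; last exact: sqr_ge0.
apply/matrixP => i j; rewrite (ord1 j) mxE.
by have /implyP/(_ isT) := wP i (mem_index_enum i); rewrite sqrf_eq0 => /eqP.
Qed.

Lemma norm2_eq0 w : norm2 w = 0 -> w = 0.
Proof. by move=> w0; apply: sqnorm_eq0; rewrite -norm2_sqr w0 expr0n. Qed.

Lemma sqnormB a b : sqnorm (a - b) = sqnorm a - 2 * vdot a b + sqnorm b.
Proof. rewrite -!vdotxx !(vdotBl, vdotBr) (vdotC b a); ring. Qed.

Lemma sqnormD a b : sqnorm (a + b) = sqnorm a + 2 * vdot a b + sqnorm b.
Proof. rewrite -!vdotxx !(vdotDl, vdotDr) (vdotC b a); ring. Qed.

Lemma sqnormZ (c : R) a : sqnorm (c *: a) = c ^+ 2 * sqnorm a.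
Proof. by rewrite -!vdotxx vdotZl vdotZr mulrA -expr2. Qed.

Lemma cauchy_schwarz a b : vdot a b <= norm2 a * norm2 b.
Proof.
have key : vdot a b ^+ 2 <= sqnorm a * sqnorm b.
  have [b0|bn0] := eqVneq (sqnorm b) 0.
    by rewrite b0 mulr0 (sqnorm_eq0 b0) vdot0r expr0n.
  have bp : 0 < sqnorm b by rewrite lt_def bn0 sqnorm_ge0.
  have := sqnorm_ge0 (sqnorm b *: a - vdot a b *: b).
  rewrite sqnormB !(sqnormZ, vdotZl, vdotZr).
  nra.
apply: le_trans (ler_norm _) _.
rewrite -sqrtrM ?sqnorm_ge0 // -(sqrtr_sqr (vdot a b)) ler_sqrt //.
by rewrite mulr_ge0 ?sqnorm_ge0.
Qed.

Lemma vdot_eq0_of_min r w :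
  (forall t : R, sqnorm r <= sqnorm (r - t *: w)) -> vdot r w = 0.
Proof.
move=> rmin; have q0 := sqnorm_ge0 w.
(* For this [t] the gain [2 * t * vdot r w] exceeds the loss [t ^+ 2 * sqnorm w]
   unless [t = 0]. *)
have [t tc] : exists t, vdot r w = t * (sqnorm w + 1).
  by exists (vdot r w / (sqnorm w + 1)); rewrite divfK // gt_eqF // ltr_pwDr.
have := rmin t; rewrite sqnormB vdotZr sqnormZ tc => ineq.
have t0 : t ^+ 2 <= 0 by nra.
by apply/eqP; rewrite mulf_eq0 -sqrf_eq0 eq_le t0 sqr_ge0.
Qed.

Lemma norm2D_le a b : norm2 (a + b) <= norm2 a + norm2 b.
Proof.
have := cauchy_schwarz a b; have := norm2_ge0 (a + b).
have := norm2_ge0 a; have := norm2_ge0 b.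
have := norm2_sqr (a + b); rewrite sqnormD -!norm2_sqr; nra.
Qed.

Lemma norm2N a : norm2 (- a) = norm2 a.
Proof.
by rewrite -scaleN1r /norm2 -/(sqnorm (-1 *: a)) -/(sqnorm a) sqnormZ sqrrN expr1n mul1r.
Qed.

Lemma norm2B_le a b : norm2 (a - b) <= norm2 a + norm2 b.
Proof. by rewrite -(norm2N b); apply: norm2D_le. Qed.

End Euclid.

Section Support.
Variables (R : realType) (d : nat).
Implicit Types (a b w z : 'cV[R]_d) (A B T : {set 'I_d}).

Lemma in_supp w i : (i \in supp w) = (w i 0 != 0).
Proof. by rewrite inE. Qed.

Lemma supp_subP T w : reflect (forall i, i \notin T -> w i 0 = 0) (supp w \subset T).
Proof.
apply: (iffP subsetP) => wT i; last by rewrite in_supp; apply: contraR => /wT ->.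
by move=> iT; apply/eqP; apply: contraNT iT => wi; apply: wT; rewrite in_supp.
Qed.

Lemma suppD a b : supp (a + b) \subset supp a :|: supp b.
Proof.
apply/supp_subP => i; rewrite in_setU negb_or !in_supp !negbK.
by case/andP => /eqP ai /eqP bi; rewrite mxE ai bi addr0.
Qed.

Lemma suppN a : supp (- a) = supp a.
Proof. by apply/setP => i; rewrite !in_supp mxE oppr_eq0. Qed.

Lemma suppZ (c : R) a : supp (c *: a) \subset supp a.
Proof. by apply/supp_subP => i; rewrite in_supp negbK => /eqP ai; rewrite mxE ai mulr0. Qed.

Lemma restrictE T w i : restrict T w i 0 = if i \in T then w i 0 else 0.
Proof. by rewrite mxE. Qed.

Lemma supp_restrict T w : supp (restrict T w) \subset T.
Proof. by apply/supp_subP => i iT; rewrite restrictE (negbTE iT). Qed.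

Lemma restrictB T a b : restrict T (a - b) = restrict T a - restrict T b.
Proof. by apply/matrixP => i j; rewrite !mxE; case: (i \in T); rewrite ?subr0. Qed.

Lemma restrict_id T w : supp w \subset T -> restrict T w = w.
Proof.
move/supp_subP => wT; apply/matrixP => i j; rewrite (ord1 j) mxE.
by case: ifP => // /negbT /wT ->.
Qed.

Lemma vdot_restrictl T w z : vdot (restrict T w) z = \sum_(i in T) w i 0 * z i 0.
Proof.
rewrite /vdot (bigID (mem T)) /= [X in _ + X]big1 ?addr0 => [|i /negbTE iT].
  by apply: eq_bigr => i iT; rewrite restrictE iT.
by rewrite restrictE iT mul0r.
Qed.

Lemma vdot_restrict T w z : vdot (restrict T w) z = vdot w (restrict T z).
Proof.
by rewrite vdot_restrictl vdotC vdot_restrictl; apply: eq_bigr => i _; rewrite mulrC.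
Qed.

Lemma sqnorm_restrict T w : sqnorm (restrict T w) = \sum_(i in T) w i 0 ^+ 2.
Proof. by rewrite -vdotxx vdot_restrictl; apply: eq_bigr => i iT; rewrite restrictE iT. Qed.

Lemma vdot_restrict_self T w : vdot (restrict T w) w = sqnorm (restrict T w).
Proof. by rewrite vdot_restrictl sqnorm_restrict; apply: eq_bigr => i _; rewrite expr2. Qed.

Lemma vdot_disjoint A B a b : supp a \subset A -> supp b \subset B ->
  [disjoint A & B] -> vdot a b = 0.
Proof.
move=> /supp_subP aA /supp_subP bB AB; apply: big1 => i _.
have [iA|iA] := boolP (i \in A); last by rewrite aA ?mul0r.
by rewrite bB ?mulr0 // (disjointFr AB iA).
Qed.

Lemma sparse_subset (m : nat) A w : supp w \subset A -> (#|A| <= m)%N -> sparse m w.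
Proof. by move=> wA Am; apply: leq_trans Am; apply: subset_leq_card. Qed.

End Support.

Section RestrictedIsometry.
Variables (R : realType) (N d m : nat) (Phi : 'M[R]_(N, d)) (eps : R).
Hypothesis ric : RIC Phi m eps.
Hypotheses (eps_ge0 : 0 <= eps) (eps_le1 : eps <= 1).

Lemma vdot_trmx (y : 'cV[R]_N) (z : 'cV[R]_d) : vdot (Phi^T *m y) z = vdot y (Phi *m z).
Proof.
rewrite /vdot; under eq_bigr => i _ do rewrite !mxE big_distrl /=.
rewrite exchange_big /=; apply: eq_bigr => k _.
by rewrite !mxE big_distrr /=; apply: eq_bigr => i _; rewrite !mxE; ring.
Qed.

Lemma ric_sqnorm_le (w : 'cV[R]_d) : sparse m w ->
  sqnorm (Phi *m w) <= (1 + eps) ^+ 2 * sqnorm w.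
Proof.
case/ric => _ up; rewrite -!norm2_sqr -exprMn.
by apply: lerXn2r; rewrite ?nnegrE ?norm2_ge0 // (le_trans (norm2_ge0 _) up).
Qed.

Lemma ric_sqnorm_ge (w : 'cV[R]_d) : sparse m w ->
  (1 - eps) ^+ 2 * sqnorm w <= sqnorm (Phi *m w).
Proof.
case/ric => lo _; rewrite -!norm2_sqr -exprMn.
by apply: lerXn2r; rewrite ?nnegrE ?norm2_ge0 ?mulr_ge0 ?norm2_ge0 ?subr_ge0.
Qed.

Section Disjoint.
Variables (A B : {set 'I_d}).
Hypotheses (AB : [disjoint A & B]) (ABm : (#|A :|: B| <= m)%N).

(* Polarization: the bounds on |Phi (a + b)|^2 and |Phi (a - b)|^2 differ by
   4 eps (|a|^2 + |b|^2), as a and b are orthogonal. *)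
Lemma ric_vdot_disjoint_sqnorm a b : supp a \subset A -> supp b \subset B ->
  vdot (Phi *m a) (Phi *m b) <= eps * (sqnorm a + sqnorm b).
Proof.
move=> aA bB; have ab : vdot a b = 0 := vdot_disjoint aA bB AB.
have sp c : supp c \subset supp a :|: supp b -> sparse m c.
  move=> cab; apply: sparse_subset cab (leq_trans _ ABm).
  by apply: subset_leq_card; apply: setUSS.
have /ric_sqnorm_le : sparse m (a + b) by apply/sp/suppD.
have /ric_sqnorm_ge : sparse m (a - b) by apply/sp; rewrite -(suppN b) suppD.
rewrite mulmxBr mulmxDr !sqnormB !sqnormD ab.
by have := sqnorm_ge0 a; have := sqnorm_ge0 b; nra.
Qed.

Lemma ric_vdot_disjoint a b : supp a \subset A -> supp b \subset B ->
  vdot (Phi *m a) (Phi *m b) <= 2 * eps * norm2 a * norm2 b.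
Proof.
move=> aA bB.
have [a0|na] := eqVneq (norm2 a) 0.
  by rewrite (norm2_eq0 a0) mulmx0 vdot0l norm2_0 mulr0 mul0r.
have [b0|nb] := eqVneq (norm2 b) 0.
  by rewrite (norm2_eq0 b0) mulmx0 vdot0r norm2_0 mulr0.
(* Rescale to [l *: a] and [l^-1 *: b] with [l ^+ 2 = norm2 b / norm2 a]. *)
set l := Num.sqrt (norm2 b / norm2 a).
have pa : 0 < norm2 a by rewrite lt_def na norm2_ge0.
have pb : 0 < norm2 b by rewrite lt_def nb norm2_ge0.
have lp : 0 < l by rewrite sqrtr_gt0 divr_gt0.
have l2 : l ^+ 2 = norm2 b / norm2 a by rewrite sqr_sqrtr // ltW // divr_gt0.
have := ric_vdot_disjoint_sqnorm (subset_trans (suppZ l a) aA)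
  (subset_trans (suppZ l^-1 b) bB).
rewrite -!scalemxAr vdotZl vdotZr !sqnormZ -!norm2_sqr exprVn l2 mulrA mulfV ?gt_eqF //.
rewrite mul1r => /le_trans; apply.
suff -> : norm2 b / norm2 a * norm2 a ^+ 2 + (norm2 b / norm2 a)^-1 * norm2 b ^+ 2
  = 2 * norm2 a * norm2 b by rewrite !mulrA (mulrC eps 2).
by field; rewrite !gt_eqF.
Qed.

End Disjoint.

Lemma ric_norm2_restrict_trmx (T : {set 'I_d}) (y : 'cV[R]_N) : (#|T| <= m)%N ->
  norm2 (restrict T (Phi^T *m y)) <= (1 + eps) * norm2 y.
Proof.
move=> Tm; set z := restrict T (Phi^T *m y).
have [_ up] := ric (sparse_subset (supp_restrict T (Phi^T *m y)) Tm).
apply: le_of_sqr_le_mulr; rewrite ?norm2_ge0 ?mulr_ge0 ?norm2_ge0 ?addr_ge0 //.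
rewrite norm2_sqr -vdotxx {1}/z vdot_restrict restrict_id ?supp_restrict //.
rewrite vdot_trmx; apply: le_trans (cauchy_schwarz _ _) _.
by rewrite [_ * norm2 (Phi *m z)]mulrC mulrA [norm2 z * _]mulrC ler_wpM2r ?norm2_ge0.
Qed.

End RestrictedIsometry.

Section LeastSquares.
Variables (R : realType) (N d n : nat) (Phi : 'M[R]_(N, d)) (v : 'cV[R]_d).

Definition orth_residual (I : {set 'I_d}) (r : 'cV[R]_N) : Prop :=
  exists y : 'cV[R]_d, [/\ supp y \subset I, r = Phi *m v - Phi *m y &
    forall z : 'cV[R]_d, supp z \subset I -> vdot r (Phi *m z) = 0].

Lemma orth_residual_init : orth_residual set0 (Phi *m v).
Proof.
exists 0; split; first by apply/supp_subP => i _; rewrite mxE.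
  by rewrite mulmx0 subr0.
move=> z /supp_subP z0; suff -> : z = 0 by rewrite mulmx0 vdot0r.
by apply/matrixP => i j; rewrite (ord1 j) mxE z0 ?inE.
Qed.

Lemma is_residual_orth I r : is_residual Phi (Phi *m v) I r -> orth_residual I r.
Proof.
case=> y [yI [ymin ->]]; exists y; split=> // z zI.
apply: vdot_eq0_of_min => t.
have ytzI : supp (y + t *: z) \subset I.
  by apply: subset_trans (suppD _ _) _; rewrite subUset yI (subset_trans (suppZ _ _)).
have := ymin _ ytzI; rewrite -!norm2_sqr mulmxDr -scalemxAr opprD addrA.
by apply: lerXn2r; rewrite nnegrE norm2_ge0.
Qed.

Lemma romp_state_orth I r : romp_state Phi (Phi *m v) n I r -> orth_residual I r.
Proof.
elim=> [|{}I {}r I' r' _ _ [_ [_ [_ [_ [_ [_ res]]]]]]]; first exact: orth_residual_init.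
exact: is_residual_orth.
Qed.

Lemma orth_residual_decomp I r : orth_residual I r ->
  exists a : 'cV[R]_d, [/\ supp a \subset I,
    r = Phi *m (restrict (supp v :\: I) v - a) &
    forall z : 'cV[R]_d, supp z \subset I -> vdot r (Phi *m z) = 0].
Proof.
case=> y [/supp_subP yI -> rI]; exists (y - (v - restrict (supp v :\: I) v)); split=> //.
  apply/supp_subP => i iI; rewrite !mxE yI // !inE (negbTE iI) /=.
  by have [->|_] := eqVneq (v i 0) 0; rewrite ?eqxx /= !subrr.
by rewrite -mulmxBr opprB addrA subrKC.
Qed.

End LeastSquares.

Section OrthogonalProjection.
Variables (R : realType) (N d m : nat) (Phi : 'M[R]_(N, d)) (eps : R).
Hypotheses (ric : RIC Phi m eps) (eps_ge0 : 0 <= eps) (eps_small : eps <= 1 / 11).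
Variables (A B : {set 'I_d}) (a b : 'cV[R]_d).
Hypotheses (AB : [disjoint A & B]) (ABm : (#|A :|: B| <= m)%N).
Hypotheses (aA : supp a \subset A) (bB : supp b \subset B).
Hypothesis orth : vdot (Phi *m (b - a)) (Phi *m a) = 0.

Let eps_le1 : eps <= 1. Proof. by apply: le_trans eps_small _; lra. Qed.

Lemma ric_orth_norm2_le : (1 - eps) * norm2 (Phi *m a) <= 2 * eps * norm2 b.
Proof.
have sqPa : norm2 (Phi *m a) ^+ 2 = vdot (Phi *m a) (Phi *m b).
  by move/eqP: orth; rewrite mulmxBr vdotBl subr_eq0 vdotxx vdotC norm2_sqr => /eqP.
have Pab := ric_vdot_disjoint ric eps_le1 AB ABm aA bB.
have [lo _] := ric (sparse_subset (subset_trans aA (subsetUl A B)) ABm).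
have e1 : 0 <= 1 - eps by rewrite subr_ge0.
have ebn : 0 <= 2 * eps * norm2 b by rewrite !mulr_ge0 ?norm2_ge0.
apply: le_of_sqr_le_mulr => //; first by rewrite mulr_ge0 ?norm2_ge0.
rewrite exprMn sqPa.
apply: le_trans (_ : _ <= (1 - eps) ^+ 2 * (2 * eps * norm2 a * norm2 b)) _.
  by rewrite ler_wpM2l ?exprn_ge0.
by have := ler_wpM2l (mulr_ge0 e1 ebn) lo; rewrite expr2; lra.
Qed.

Lemma ric_orth_gram_le (T : {set 'I_d}) : (#|T| <= m)%N ->
  norm2 (restrict T (Phi^T *m (Phi *m a))) <= 12 / 5 * eps * norm2 b.
Proof.
move=> Tm; apply: le_trans (ric_norm2_restrict_trmx ric eps_ge0 _ Tm) _.
have e1 : 0 < 1 - eps by have := eps_small; lra.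
rewrite -(ler_pM2l e1).
have := ler_wpM2l (_ : 0 <= 1 + eps) ric_orth_norm2_le; rewrite ?addr_ge0 // => le.
(* (1 + eps) / (1 - eps) <= 6 / 5 exactly when eps <= 1 / 11 *)
have : 0 <= eps * norm2 b * (2 / 5 - 22 / 5 * eps).
  by rewrite !mulr_ge0 ?norm2_ge0 // subr_ge0; have := eps_small; lra.
nra.
Qed.

End OrthogonalProjection.

Section ResidualCorrelation.
Variables (R : realType) (N d n : nat) (Phi : 'M[R]_(N, d)) (v : 'cV[R]_d) (eps : R).
Hypotheses (v_sparse : sparse n v) (ric : RIC Phi (2 * n) eps).
Hypotheses (eps_ge0 : 0 <= eps) (eps_small : eps <= 1 / 11).

Definition correct_majority (I : {set 'I_d}) := (#|I :\: supp v| <= #|I :&: supp v|)%N.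

Lemma card_correct_majority (I : {set 'I_d}) :
  correct_majority I -> (#|I :|: supp v| <= 2 * n)%N.
Proof.
move: v_sparse; rewrite /correct_majority /sparse => vn maj.
have := cardsUI I (supp v); have := cardsID (supp v) I.
have : (#|I :&: supp v| <= #|supp v|)%N by apply/subset_leq_card/subsetIr.
lia.
Qed.

Lemma orth_residual_gram_le (I T : {set 'I_d}) (r : 'cV[R]_N) :
  orth_residual Phi v I r -> correct_majority I -> (#|T| <= 2 * n)%N ->
  norm2 (restrict T (Phi^T *m (Phi *m restrict (supp v :\: I) v) - Phi^T *m r))
    <= 12 / 5 * eps * norm2 (restrict (supp v :\: I) v).
Proof.
case/orth_residual_decomp => a [aI -> rI] maj Tn.
rewrite -mulmxBr -mulmxBr opprB addrC subrK.
have IS : [disjoint I & supp v :\: I].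
  by rewrite -setI_eq0 setIDA setIC -setIDA setDv setI0.
have ISn : (#|I :|: (supp v :\: I)| <= 2 * n)%N.
  by apply: leq_trans (card_correct_majority maj); apply/subset_leq_card/setUS/subsetDl.
exact: (ric_orth_gram_le ric eps_ge0 eps_small IS ISn aI (supp_restrict _ _) (rI _ aI) Tn).
Qed.

End ResidualCorrelation.

Lemma dyadic_level (R : realFieldType) (M t : R) (K : nat) :
  M / 2 ^+ K < t -> t <= M -> exists2 k, (k < K)%N & M / 2 ^+ k.+1 < t <= M / 2 ^+ k.
Proof.
elim: K => [|K IH]; first by rewrite expr0 divr1 => /lt_le_trans/[apply]; rewrite ltxx.
move=> MKt tM; have [tMK|MKt'] := leP t (M / 2 ^+ K); first by exists K; rewrite ?MKt.
by have [k kK lev] := IH MKt' tM; exists k; rewrite // ltnS ltnW.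
Qed.

Section Energy.
Variables (R : realType) (d : nat) (u : 'cV[R]_d).
Implicit Types A B J S T : {set 'I_d}.

Definition energy T : R := \sum_(i in T) u i 0 ^+ 2.

Definition level (M : R) (k : nat) : {set 'I_d} :=
  [set j | M / 2 ^+ k.+1 < `|u j 0| <= M / 2 ^+ k].

Lemma energyE T : energy T = sqnorm (restrict T u).
Proof. by rewrite sqnorm_restrict. Qed.

Lemma energy_ge0 T : 0 <= energy T.
Proof. by apply: sumr_ge0 => i _; rewrite sqr_ge0. Qed.

Lemma energy_set1 i : energy [set i] = u i 0 ^+ 2.
Proof. by rewrite /energy big_set1. Qed.

Lemma energy_split T A : energy T = energy (T :&: A) + energy (T :\: A).
Proof.
by rewrite /energy (bigID (mem A)) /=; congr (_ + _); apply: eq_bigl => i; rewrite !inE andbC.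
Qed.

Lemma energy_subset A B : A \subset B -> energy A <= energy B.
Proof. by move=> AB; rewrite (energy_split B A) (setIidPr AB) lerDl energy_ge0. Qed.

Lemma energy_double_count A B (c : R) :
  (forall i j, i \in A -> j \in B -> u i 0 ^+ 2 <= c * u j 0 ^+ 2) ->
  #|B|%:R * energy A <= #|A|%:R * (c * energy B).
Proof.
move=> ABc.
have -> : #|B|%:R * energy A = \sum_(i in A) \sum_(j in B) u i 0 ^+ 2.
  by rewrite mulr_sumr; apply: eq_bigr => i _; rewrite sumr_const mulr_natl.
have -> : #|A|%:R * (c * energy B) = \sum_(i in A) \sum_(j in B) c * u j 0 ^+ 2.
  by rewrite -mulr_sumr sumr_const mulr_natl.
by apply: ler_sum => i iA; apply: ler_sum => j jB; apply: ABc.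
Qed.

Lemma identify_energy n J S : identify n u J -> (#|S| <= n)%N -> energy S <= energy J.
Proof.
rewrite /identify; case: ifP => _.
  move=> -> _; rewrite (energy_split S (supp u)) [X in _ + X]big1 ?addr0.
    exact/energy_subset/subsetIr.
  by move=> i; rewrite !inE negbK => /andP[/eqP -> _]; rewrite expr0n.
(* Trading S :\: J for the at least as large J :\: S only increases the energy. *)
case=> Jn Jtop Sn; rewrite (energy_split S J) (energy_split J S) setIC lerD2l.
have SJ : (#|S :\: J| <= #|J :\: S|)%N.
  by have := cardsID J S; have := cardsID S J; rewrite setIC; lia.
have [JS0|JS_gt0] := posnP #|J :\: S|.
  move: SJ; rewrite JS0 leqn0 cards_eq0 => /eqP ->.
  by rewrite /energy big_set0 energy_ge0.
have dc : #|J :\: S|%:R * energy (S :\: J) <= #|S :\: J|%:R * (1 * energy (J :\: S)).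
  apply: energy_double_count => i j; rewrite !inE mul1r => /andP[iJ _] /andP[_ jJ].
  by rewrite sqr_le_norm // Jtop.
rewrite mul1r in dc.
rewrite -(ler_pM2l (_ : 0 < #|J :\: S|%:R :> R)) ?ltr0n //.
by apply: le_trans dc _; rewrite ler_wpM2r ?energy_ge0 ?ler_nat.
Qed.

Lemma comparable_level A (M : R) k : Defs.comparable u (A :&: level M k).
Proof.
move=> i j; rewrite !inE => /andP[_ /andP[_ iM]] /andP[_ /andP[Mj _]].
apply: le_trans iM _; have -> : M / 2 ^+ k = 2 * (M / 2 ^+ k.+1).
  by rewrite exprS; field; rewrite expf_neq0 ?pnatr_eq0.
by rewrite ler_pM2l // ltW.
Qed.

Lemma energy_levels J (M : R) K : {in J, forall j, `|u j 0| <= M} ->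
  energy J <= #|J|%:R * (M / 2 ^+ K) ^+ 2 + \sum_(k < K) energy (J :&: level M k).
Proof.
move=> JM; have -> : \sum_(k < K) energy (J :&: level M k)
    = \sum_(i in J) \sum_(k < K) (if i \in level M k then u i 0 ^+ 2 else 0).
  rewrite exchange_big; apply: eq_bigr => k _.
  by rewrite -big_mkcondr; apply: eq_bigl => i; rewrite inE.
rewrite mulr_natl -sumr_const -big_split; apply: ler_sum => i iJ.
have lev_ge0 : 0 <= \sum_(k < K) (if i \in level M k then u i 0 ^+ 2 else 0).
  by apply: sumr_ge0 => k _; case: ifP; rewrite ?sqr_ge0.
have [small|big] := leP `|u i 0| (M / 2 ^+ K).
  apply: ler_wpDr => //; rewrite -[u i 0 ^+ 2]real_normK ?num_real //.
  by rewrite lerXn2r ?nnegrE // (le_trans _ small).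
have [k kK lev] := dyadic_level big (JM i iJ).
rewrite (bigD1 (Ordinal kK)) //= inE lev addrCA ler_wpDr ?addr_ge0 ?sqr_ge0 //.
by apply: sumr_ge0 => k' _; case: ifP; rewrite ?sqr_ge0.
Qed.

(* The dyadic levels of |u| below its maximum M on J are comparable subsets of J,
   so each has energy at most that of J0; coordinates below M / 2^K contribute
   at most n (M / 2^K)^2 <= M^2 / 2. *)
Lemma regularize_energy n J J0 K : (#|J| <= n)%N -> regularize u J J0 ->
  (2 * n <= 4 ^ K)%N -> energy J <= 2 * K%:R * energy J0.
Proof.
move=> Jn [_ [_ J0max]] nK.
have [->|[j0 j0J]] := set_0Vmem J.
  by rewrite /energy big_set0 !mulr_ge0 ?energy_ge0.
have [jm jmJ /= Mmax] := Order.TotalTheory.arg_maxP (fun j => `|u j 0|) j0J.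
set M := `|u jm 0| in Mmax.
have lev k : energy (J :&: level M k) <= energy J0.
  rewrite !energyE -!norm2_sqr; apply: lerXn2r; rewrite ?nnegrE ?norm2_ge0 //.
  by apply: J0max; [apply: subsetIl | apply: comparable_level].
have M2 : M ^+ 2 <= energy J.
  by rewrite /M real_normK ?num_real // -energy_set1 energy_subset ?sub1set.
have tail : #|J|%:R * (M / 2 ^+ K) ^+ 2 <= M ^+ 2 / 2.
  have D : 2 * #|J|%:R <= (2 ^+ K) ^+ 2 :> R.
    have four : (2 : R) ^+ 2 = 4%:R by rewrite expr2 -natrM.
    by rewrite -exprM mulnC exprM four -natrX -natrM ler_nat; lia.
  rewrite expr_div_n mulrA ler_pdivrMr ?exprn_gt0 //.
  by have := sqr_ge0 M; nra.
have levs : \sum_(k < K) energy (J :&: level M k) <= K%:R * energy J0.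
  have -> : K%:R * energy J0 = \sum_(k < K) energy J0.
    by rewrite sumr_const card_ord mulr_natl.
  by apply: ler_sum => k _.
by have := energy_levels K Mmax; lra.
Qed.

(* In a comparable set squared coordinates differ by a factor at most 4, so the
   part of J0 holding most of its indices carries at least a fifth of its energy. *)
Lemma comparable_energy_major J0 S : Defs.comparable u J0 ->
  (#|J0 :&: S| < #|J0 :\: S|)%N -> energy J0 <= 5 * energy (J0 :\: S).
Proof.
move=> cmp card_lt.
have dc : #|J0 :\: S|%:R * energy (J0 :&: S) <= #|J0 :&: S|%:R * (4 * energy (J0 :\: S)).
  apply: energy_double_count => i j; rewrite !inE => /andP[iJ0 _] /andP[_ jJ0].
  rewrite -[u i 0 ^+ 2]real_normK ?num_real // -[u j 0 ^+ 2]real_normK ?num_real //.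
  by rewrite (_ : 4 = 2 ^+ 2) -?exprMn ?lerXn2r ?nnegrE ?cmp ?mulr_ge0 // expr2; lra.
have b_gt0 : 0 < #|J0 :\: S|%:R :> R by rewrite ltr0n (leq_ltn_trans _ card_lt).
have inter_le : energy (J0 :&: S) <= 4 * energy (J0 :\: S).
  rewrite -(ler_pM2l b_gt0); apply: le_trans dc _.
  by rewrite ler_wpM2r ?mulr_ge0 ?energy_ge0 // ler_nat ltnW.
by rewrite (energy_split J0 S); lra.
Qed.

End Energy.

Section SelectionStep.
Variables (R : realType) (N d n K : nat) (Phi : 'M[R]_(N, d)) (v : 'cV[R]_d) (eps : R).
Hypotheses (v_sparse : sparse n v) (ric : RIC Phi (2 * n) eps).
Hypotheses (eps_ge0 : 0 <= eps) (eps_small : eps <= 1 / 22).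
Hypotheses (nK : (2 * n <= 4 ^ K)%N) (eps_K : 10 * K%:R * (22 / 5 * eps) ^+ 2 < (4 / 5) ^+ 2).
Variables (I : {set 'I_d}) (r : 'cV[R]_N).
Hypotheses (res : orth_residual Phi v I r) (maj : correct_majority v I) (r_neq0 : r != 0).

Local Notation S := (supp v :\: I).
Local Notation v0 := (restrict S v).
Local Notation u := (Phi^T *m r).
Local Notation u0 := (Phi^T *m (Phi *m v0)).

Let eps_le1 : eps <= 1. Proof. by apply: le_trans eps_small _; lra. Qed.
Let eps_le11 : eps <= 1 / 11. Proof. by apply: le_trans eps_small _; lra. Qed.

Let card_S : (#|S| <= n)%N.
Proof. exact/(leq_trans _ v_sparse)/subset_leq_card/subsetDl. Qed.

Let card_S2 : (#|S| <= 2 * n)%N.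
Proof. by rewrite (leq_trans card_S) // leq_pmull. Qed.

Let gram_le (T : {set 'I_d}) : (#|T| <= 2 * n)%N ->
  norm2 (restrict T (u0 - u)) <= 12 / 5 * eps * norm2 v0.
Proof. exact: (orth_residual_gram_le v_sparse ric eps_ge0 eps_le11 res maj). Qed.

Lemma norm2_v0_gt0 : 0 < norm2 v0.
Proof.
case/orth_residual_decomp: res => a [aI r_def rI].
rewrite lt_def norm2_ge0 andbT; apply: contra r_neq0 => /eqP/norm2_eq0 v00.
have : sqnorm r = 0.
  by rewrite -vdotxx {2}r_def v00 sub0r mulmxN vdotC vdotNl vdotC rI ?oppr0.
by move/sqnorm_eq0 ->.
Qed.

Lemma energy_correct_ge : (4 / 5 * norm2 v0) ^+ 2 <= energy u S.
Proof.
have s_gt0 := norm2_v0_gt0; set s := norm2 v0 in s_gt0 *.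
have u0S : (1 - eps) ^+ 2 * s <= norm2 (restrict S u0).
  have v0S : supp v0 \subset S := supp_restrict S v.
  have := ric_sqnorm_ge ric eps_le1 (sparse_subset v0S card_S2).
  have := cauchy_schwarz (restrict S u0) v0.
  rewrite vdot_restrict (restrict_id v0S) vdot_trmx vdotxx -!norm2_sqr -/s => cs lo.
  by rewrite -(ler_pM2l s_gt0) mulrCA -expr2 [s * _]mulrC (le_trans lo cs).
have uS : ((1 - eps) ^+ 2 - 12 / 5 * eps) * s <= norm2 (restrict S u).
  have := norm2D_le (restrict S u) (restrict S (u0 - u)).
  have := gram_le card_S2.
  by rewrite -/s restrictB [restrict S u + _]addrC subrK; lra.
rewrite energyE -norm2_sqr; apply: lerXn2r; rewrite ?nnegrE ?norm2_ge0 //; first lra.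
apply: le_trans uS; apply: ler_wpM2r; first exact: ltW.
by have := sqr_ge0 eps; have := eps_small; rewrite !expr2; lra.
Qed.

Lemma energy_wrong_le (L : {set 'I_d}) : [disjoint L & S] -> (#|L| <= n)%N ->
  energy u L <= (22 / 5 * eps * norm2 v0) ^+ 2.
Proof.
move=> LS Ln; set s := norm2 v0.
have LSn : (#|L :|: S| <= 2 * n)%N.
  by rewrite (leq_trans (leq_card_setU _ _)) // mul2n -addnn leq_add.
have u0L : norm2 (restrict L u0) <= 2 * eps * s.
  have := ric_vdot_disjoint ric eps_le1 LS LSn (supp_restrict L u0) (supp_restrict S v).
  rewrite vdotC -vdot_trmx vdotC vdot_restrict_self -norm2_sqr -/s.
  move=> le; apply: le_of_sqr_le_mulr; rewrite ?norm2_ge0 ?mulr_ge0 ?norm2_ge0 //.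
  by nra.
have uL : norm2 (restrict L u) <= 22 / 5 * eps * s.
  have := norm2B_le (restrict L u0) (restrict L (u0 - u)).
  rewrite -restrictB opprB subrKC.
  by have := gram_le (leq_trans Ln (leq_pmull n (isT : 0 < 2)%N)); rewrite -/s; lra.
rewrite energyE -norm2_sqr; apply: lerXn2r; rewrite ?nnegrE ?norm2_ge0 //.
by apply: le_trans (norm2_ge0 _) uL.
Qed.

Lemma romp_step_majority (J J0 : {set 'I_d}) : identify n u J -> regularize u J J0 ->
  (#|J0 :\: S| <= #|J0 :&: S|)%N.
Proof.
move=> idJ regJ; rewrite leqNgt; apply/negP => minority.
have s_gt0 := norm2_v0_gt0; set s := norm2 v0 in s_gt0.
have Jn : (#|J| <= n)%N by move: idJ; rewrite /identify; case: ifP => [+ ->|_ [-> _]].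
have [J0J [cmp _]] := regJ.
have wrong : energy u (J0 :\: S) <= (22 / 5 * eps * s) ^+ 2.
  apply: energy_wrong_le.
    by rewrite -setI_eq0 setDE -setIA [~: S :&: S]setIC setICr setI0.
  exact/(leq_trans _ Jn)/subset_leq_card/(subset_trans (subsetDl _ _) J0J).
have : (4 / 5 * s) ^+ 2 <= 10 * K%:R * (22 / 5 * eps * s) ^+ 2.
  apply: le_trans energy_correct_ge _.
  apply: le_trans (identify_energy idJ card_S) _.
  apply: le_trans (regularize_energy Jn regJ nK) _.
  have := comparable_energy_major cmp minority; have := energy_ge0 u J0.
  have K0 : 0 <= K%:R :> R by rewrite ler0n.
  by nra.
by have := eps_K; rewrite -(ltr_pM2r (exprn_gt0 2 s_gt0)) !exprMn; lra.
Qed.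

Lemma romp_step_correct_majority (J J0 : {set 'I_d}) : identify n u J -> regularize u J J0 ->
  correct_majority v (I :|: J0).
Proof.
move=> idJ regJ; have major := romp_step_majority idJ regJ; move: maj.
rewrite /correct_majority setDUl setIUl.
have IS0 : (I :&: supp v) :&: (J0 :&: S) = set0.
  by apply/setP => i; rewrite !inE; case: (i \in I); rewrite ?andbF.
have := cardsUI (I :&: supp v) (J0 :&: S); rewrite IS0 cards0 addn0.
have : (#|(I :&: supp v) :|: (J0 :&: S)| <= #|I :&: supp v :|: J0 :&: supp v|)%N.
  by apply/subset_leq_card/setUS/setIS/subsetDl.
have : (#|J0 :\: supp v| <= #|J0 :\: S|)%N by apply/subset_leq_card/setDS/subsetDl.
have := (leq_card_setU (I :\: supp v) (J0 :\: supp v)).1.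
lia.
Qed.

End SelectionStep.

Lemma romp_state_correct_majority (R : realType) (N d n K : nat) (Phi : 'M[R]_(N, d))
    (v : 'cV[R]_d) (eps : R) (I : {set 'I_d}) (r : 'cV[R]_N) :
  sparse n v -> RIC Phi (2 * n) eps -> 0 <= eps -> eps <= 1 / 22 ->
  (2 * n <= 4 ^ K)%N -> 10 * K%:R * (22 / 5 * eps) ^+ 2 < (4 / 5) ^+ 2 ->
  romp_state Phi (Phi *m v) n I r -> correct_majority v I.
Proof.
move=> v_sparse ric eps_ge0 eps_small nK eps_K.
elim=> [|{}I {}r I' r' st maj [r_neq0 [J [J0 [idJ [regJ [-> _]]]]]]].
  by rewrite /correct_majority set0D set0I cards0.
exact: (romp_step_correct_majority v_sparse ric eps_ge0 eps_small nK eps_K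
  (romp_state_orth st) maj r_neq0 idJ regJ).
Qed.

(* ln 2 = - ln (2/3) - ln (3/4) >= 1/3 + 1/4 *)
Lemma ln2_ge (R : realType) : 7 / 12 <= ln (2 : R).
Proof.
have l23 : ln (1 + (-1 / 3) : R) <= -1 / 3 by apply: le_ln1Dx; lra.
have l34 : ln (1 + (-1 / 4) : R) <= -1 / 4 by apply: le_ln1Dx; lra.
have : (2 : R)^-1 = (1 + (-1 / 3)) * (1 + (-1 / 4)) by field.
move/(congr1 (@ln R)); rewrite lnV ?lnM ?posrE //; lra.
Qed.

Lemma up_log4_le_pow4 (n : nat) : (1 < n)%N -> (4 ^ up_log 4 (2 * n) <= n ^ 4)%N.
Proof.
move=> n_gt1; set K := up_log 4 (2 * n).
have n2_gt1 : (1 < 2 * n)%N by lia.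
have K_gt0 : (0 < K)%N by rewrite up_log_gt0 n2_gt1.
have := up_log_gtn (isT : 1 < 4)%N n2_gt1; rewrite -/K => K_min.
have : (8 <= n ^ 3)%N by rewrite (_ : 8 = 2 ^ 3)%N // leq_exp2r.
rewrite (expnSr n 3) -(prednK K_gt0) [(4 ^ _)%N]expnS => n3.
by rewrite (leq_trans (leq_mul (leqnn 4) (ltnW K_min))) // mulnA leq_mul2r n3 orbT.
Qed.

Lemma pow4_le_ln (R : realType) (n K : nat) : (0 < n)%N -> (4 ^ K <= n ^ 4)%N ->
  K%:R * (7 / 6) <= 4 * ln (n%:R : R).
Proof.
move=> n_gt0 n4; have n_gt0R : (0 : R) < n%:R by rewrite ltr0n.
have ln4 : ln (4 : R) = ln 2 *+ 2 by rewrite -lnXn ?ltr0n // expr2 -natrM.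
suff : K%:R * (2 * ln (2 : R)) <= 4 * ln (n%:R : R).
  by apply: le_trans; rewrite ler_wpM2l ?ler0n //; have := ln2_ge R; lra.
rewrite !mulr_natl -ln4 -(lnXn K (_ : (0 : R) < 4)) ?ltr0n // -(lnXn 4 n_gt0R).
rewrite ler_ln ?posrE ?exprn_gt0 ?ltr0n ?n_gt0 //.
by rewrite -natrX -natrX ler_nat.
Qed.

Lemma romp_eps_bounds (R : realType) (n : nat) : (1 < n)%N ->
  let eps : R := 3 / 100 / Num.sqrt (ln n%:R) in
  [/\ 0 <= eps, eps <= 1 / 22 &
      10 * (up_log 4 (2 * n))%:R * (22 / 5 * eps) ^+ 2 < (4 / 5) ^+ 2].
Proof.
move=> n_gt1 eps; set K := up_log 4 (2 * n); set L := ln (n%:R : R) in eps *.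
have KL := pow4_le_ln R (ltnW n_gt1) (up_log4_le_pow4 n_gt1); rewrite -/K -/L in KL.
have L_ge : 7 / 12 <= L.
  apply: le_trans (ln2_ge R) _.
  by rewrite ler_ln ?posrE ?ltr0n ?ler_nat // ltnW.
have sL_gt0 : 0 < Num.sqrt L by rewrite sqrtr_gt0; lra.
have sL2 : Num.sqrt L ^+ 2 = L by rewrite sqr_sqrtr //; lra.
have eps_sL : eps * Num.sqrt L = 3 / 100 by rewrite /eps divfK ?gt_eqF.
have sL_ge : 3 / 4 <= Num.sqrt L.
  have -> : 3 / 4 = Num.sqrt ((3 / 4) ^+ 2) :> R by rewrite sqrtr_sqr ger0_norm //; lra.
  by rewrite ler_sqrt; lra.
have eps_ge0 : 0 <= eps by rewrite divr_ge0 ?ltW //; lra.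
have eps2L : eps ^+ 2 * L = 9 / 10000 by rewrite -sL2 -exprMn eps_sL; lra.
have K_ge0 : 0 <= K%:R :> R by rewrite ler0n.
split=> //; first by nra.
rewrite -(ltr_pM2r (_ : 0 < L)); last by lra.
by rewrite exprMn; nra.
Qed.

Theorem lemma3p5 (R : realType) (N d n : nat) (Phi : 'M[R]_(N, d))
  (v : 'cV[R]_d) (I : {set 'I_d}) (r : 'cV[R]_N) :
  (1 < n)%N ->
  let eps : R := (3 / 100) / Num.sqrt (ln (n%:R)) in
  RIC Phi (2 * n) eps ->
  v != 0 -> sparse n v ->
  let x := Phi *m v in
  romp_state Phi x n I r -> r != 0 ->
  let v0 := restrict (supp v :\: I) v in
  let x0 := Phi *m v0 in
  let u0 := Phi^T *m x0 in
  let u := Phi^T *m r in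
  forall T : {set 'I_d}, (#|T| <= 2 * n)%N ->
    norm2 (restrict T (u0 - u)) <= (12 / 5) * eps * norm2 v0.
Proof.
move=> n_gt1 eps ric _ v_sparse x st _ v0 x0 u0 u T Tn.
have [eps_ge0 eps_small eps_K] := romp_eps_bounds R n_gt1.
have nK := up_logP (2 * n) (isT : 1 < 4)%N.
have maj := romp_state_correct_majority v_sparse ric eps_ge0 eps_small nK eps_K st.
have eps_le11 : eps <= 1 / 11 by apply: le_trans eps_small _; lra.
exact: (orth_residual_gram_le v_sparse ric eps_ge0 eps_le11 (romp_state_orth st) maj Tn).
Qed.
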